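(* Let $n\ge1$ and let $P=(Q,\{a,\varepsilon\},\Sigma,R,\{q_f\},q_{in},a_{in})$ be an order-$n$ HOPDA such that every rule of $R$ whose operation is $\mathrm{push}_n$ or $\mathrm{pop}_n$ has output $\varepsilon$, and whose language is $L(P)=\{$words of runs from $(q_{in},[\cdots[a_{in}]_1\cdots]_n)$ to $(q_f,[\,]_n)\}$, where $[\,]_n$ is the empty order-$n$ stack. Let $\widehat{P}$ be the order-$(n-1)$ HOPDA with tests defined below. Then $\mathrm{Unb}_a(L(P))$ holds if and only if $\mathrm{Unb}_a(L(\widehat{P}))$ holds. Definition of $\widehat{P}$: for $q,q'\in Q$ let $C_{q,q'}$ be the set of order-$(n-1)$ stacks $w$ such that $P$ has a run from $(q,[w]_n)$ to $(q',[\,]_n)$, and $C^a_{q,q'}\subseteq C_{q,q'}$ the set of those $w$ for which such a run exists that outputs at least one $a$; let $\mathrm{True}$ be the set of all order-$(n-1)$ stacks. The control states of $\widehat{P}$ are the pairs $(p_1,p_2)\in Q\times Q$ plus a fresh state $f$; the initial state is $(q_{in},q_f)$, the initial stack is $[\cdots[a_{in}]_1\cdots]_{n-1}$ (just $a_{in}$ if $n=1$), the final states are $\{f\}$, and the rules (written source, top symbol, test, output, operation, target) are: (i) for each $(p_1,b,\gamma,op,p_1')\in R$ with $op\notin\{\mathrm{push}_n,\mathrm{pop}_n\}$ and each $p_2\in Q$: $((p_1,p_2),b,\mathrm{True},\gamma,op,(p_1',p_2))$; (ii) for each $(p_1,b,\varepsilon,\mathrm{pop}_n,p_2)\in R$: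 $((p_1,p_2),b,\mathrm{True},\varepsilon,\mathrm{rew}_b,f)$; (iii) for each $(p_1,b,\varepsilon,\mathrm{push}_n,p_1')\in R$ and all $p,p_2\in Q$: $((p_1,p_2),b,C_{p,p_2},\varepsilon,\mathrm{rew}_b,(p_1',p))$ and $((p_1,p_2),b,C^a_{p,p_2},a,\mathrm{rew}_b,(p_1',p))$; (iv) for each $(p_1,b,\varepsilon,\mathrm{push}_n,p_1')\in R$ and all $p,p_2\in Q$: $((p_1,p_2),b,C_{p_1',p},\varepsilon,\mathrm{rew}_b,(p,p_2))$ and $((p_1,p_2),b,C^a_{p_1',p},a,\mathrm{rew}_b,(p,p_2))$.
   Context: Order-$0$ stacks are elements of a finite alphabet $\Sigma$; an order-$(k+1)$ stack is a finite (possibly empty) sequence $[w_1\dots w_\ell]_{k+1}$ of order-$k$ stacks, $w_1$ topmost. For an order-$n$ stack: $\mathrm{top}_1$ is the topmost symbol; $\mathrm{rew}_b$ replaces the topmost symbol by $b$; $\mathrm{push}_k$ ($1\le k\le n$) replaces the topmost order-$k$ stack $[w_1w_2\dots w_\ell]_k$ by $[w_1w_1w_2\dots w_\ell]_k$; $\mathrm{pop}_k$ replaces it by $[w_2\dots w_\ell]_k$. $\mathrm{Ops}_n$ is the set of these operations for $1\le k\le n$ (only $\mathrm{rew}_b$ when $n=0$). An order-$n$ HOPDA $(Q,\Gamma,\Sigma,R,F,q_{in},a_{in})$ has rules $R\subseteq Q\times\Sigma\times\Gamma\times\mathrm{Ops}_n\times Q$, where $\Gamma$ contains $\varepsilon$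 denoting the empty word; $(q,w)\xrightarrow{\gamma}(q',op(w))$ when $(q,b,\gamma,op,q')\in R$ and $\mathrm{top}_1(w)=b$; a run's word is the concatenation of its outputs. An order-$n$ HOPDA with tests has rules $(q,b,T,\gamma,op,q')$ where $T$ is a set of order-$n$ stacks, and the transition $(q,w)\xrightarrow{\gamma}(q',op(w))$ additionally requires $w\in T$. Unless stated otherwise, $L(\cdot)$ is the set of words of runs from $(q_{in},[\cdots[a_{in}]_1\cdots]_n)$ to a configuration with control state in $F$. $\mathrm{Unb}_a(L)$ holds iff for every $N$ some $w\in L$ contains at least $N$ occurrences of $a$. *)

From mathcomp Require Import all_boot.
Set Implicit Arguments. Unset Strict Implicit. Unset Printing Implicit Defensive.

(* Order-0 stacks are symbols of S (= Sigma); an order-(k+1) stack is a finite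
   sequence of order-k stacks, head = topmost. *)
Fixpoint stack (S : Type) (n : nat) : Type :=
  match n with 0 => S | m.+1 => seq (stack S m) end.

Fixpoint init_stack (S : Type) (n : nat) (a : S) : stack S n :=
  match n return stack S n with 0 => a | m.+1 => [:: init_stack m a] end.

Inductive op (S : Type) := Rew of S | Push of nat | Pop of nat.
Arguments Rew {S}. Arguments Push {S}. Arguments Pop {S}.

Definition in_ops (S : Type) (n : nat) (o : op S) : bool :=
  match o with Rew _ => true | Push k | Pop k => (0 < k) && (k <= n) end.

Fixpoint top1 (S : Type) (n : nat) : stack S n -> option S :=
  match n return stack S n -> option S with
  | 0 => fun s => Some s
  | m.+1 => fun s => match s with [::] => None | w :: _ => top1 w end
  end.

Fixpoint apply_op (S : Type) (o : op S) (n : nat) : stack S n -> option (stack S n) :=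
  match n return stack S n -> option (stack S n) with
  | 0 => fun s => match o with Rew b => Some b | _ => None end
  | m.+1 => fun s =>
      match s with
      | [::] => None
      | w :: s' =>
          match o with
          | Push k => if k == m.+1 then Some (w :: w :: s')
                      else omap (fun w' => w' :: s') (apply_op o w)
          | Pop k => if k == m.+1 then Some s'
                     else omap (fun w' => w' :: s') (apply_op o w)
          | Rew _ => omap (fun w' => w' :: s') (apply_op o w)
          end
      end
  end.

(* output of a transition: None = epsilon *)
Definition out (G : Type) (g : option G) : seq G :=
  if g is Some x then [:: x] else [::].

Inductive run (C G : Type) (step : C -> option G -> C -> Prop) : C -> seq G -> C -> Prop :=
| run_refl c : run step c [::] c
| run_step c g c1 u c2 : step c g c1 -> run step c1 u c2 -> run step c (out g ++ u) c2.

Definition hstep (Q S G : Type) (n : nat) (R : Q -> S -> option G -> op S -> Q -> Prop)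
    (c : Q * stack S n) (g : option G) (c' : Q * stack S n) : Prop :=
  exists b o, R c.1 b g o c'.1 /\ top1 c.2 = Some b /\ apply_op o c.2 = Some c'.2.

Definition tstep (Q S G : Type) (n : nat)
    (Rt : Q -> S -> (stack S n -> Prop) -> option G -> op S -> Q -> Prop)
    (c : Q * stack S n) (g : option G) (c' : Q * stack S n) : Prop :=
  exists b T o, Rt c.1 b T g o c'.1 /\ top1 c.2 = Some b /\ T c.2 /\
                apply_op o c.2 = Some c'.2.

Definition Unb (G : eqType) (a : G) (L : seq G -> Prop) : Prop :=
  forall N, exists w, L w /\ N <= count_mem a w.

Definition LP (Q S : Type) (G : Type) (m : nat) (R : Q -> S -> option G -> op S -> Q -> Prop)
    (qin qf : Q) (ain : S) (w : seq G) : Prop :=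
  run (hstep (n := m.+1) R) (qin, init_stack m.+1 ain) w (qf, ([::] : stack S m.+1)).

Definition Cset (Q S : Type) (G : Type) (m : nat) (R : Q -> S -> option G -> op S -> Q -> Prop)
    (q q' : Q) (w : stack S m) : Prop :=
  exists u, run (hstep (n := m.+1) R) (q, ([:: w] : stack S m.+1)) u (q', ([::] : stack S m.+1)).

Definition Caset (Q S : Type) (G : eqType) (a : G) (m : nat)
    (R : Q -> S -> option G -> op S -> Q -> Prop) (q q' : Q) (w : stack S m) : Prop :=
  exists u, run (hstep (n := m.+1) R) (q, ([:: w] : stack S m.+1)) u (q', ([::] : stack S m.+1))
            /\ a \in u.

Inductive hat_state (Q : Type) := HPair of Q & Q | HFin.
Arguments HFin {Q}.

Section Hat.
Variables (Q S : Type) (G : eqType) (a : G) (m : nat)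
          (R : Q -> S -> option G -> op S -> Q -> Prop).

Inductive hat_rule : hat_state Q -> S -> (stack S m -> Prop) -> option G -> op S ->
                     hat_state Q -> Prop :=
| hat_i p1 b g o p1' p2 : R p1 b g o p1' -> o <> Push m.+1 -> o <> Pop m.+1 ->
    hat_rule (HPair p1 p2) b (fun _ => True) g o (HPair p1' p2)
| hat_ii p1 b p2 : R p1 b None (Pop m.+1) p2 ->
    hat_rule (HPair p1 p2) b (fun _ => True) None (Rew b) HFin
| hat_iii_eps p1 b p1' p p2 : R p1 b None (Push m.+1) p1' ->
    hat_rule (HPair p1 p2) b (Cset R p p2) None (Rew b) (HPair p1' p)
| hat_iii_a p1 b p1' p p2 : R p1 b None (Push m.+1) p1' ->
    hat_rule (HPair p1 p2) b (Caset a R p p2) (Some a) (Rew b) (HPair p1' p)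
| hat_iv_eps p1 b p1' p p2 : R p1 b None (Push m.+1) p1' ->
    hat_rule (HPair p1 p2) b (Cset R p1' p) None (Rew b) (HPair p p2)
| hat_iv_a p1 b p1' p p2 : R p1 b None (Push m.+1) p1' ->
    hat_rule (HPair p1 p2) b (Caset a R p1' p) (Some a) (Rew b) (HPair p p2).

Definition LPhat (qin qf : Q) (ain : S) (w : seq G) : Prop :=
  exists s : stack S m, run (tstep hat_rule) (HPair qin qf, init_stack m ain) w (HFin, s).
End Hat.

From mathcomp Require Import all_boot zify.
Set Implicit Arguments. Unset Strict Implicit. Unset Printing Implicit Defensive.

(* P-hat simulates the run of P on its bottom order-(n-1) stack, keeping in its
   control state the state in which that stack must finally be popped.  At a
   push_n, P-hat follows one of the two copies and checks by a test that the
   other copy can be emptied, emitting an a when the checked run emits one.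
   Replacing every test by a witness run turns an accepting run of P-hat into a
   run of P with at least as many a's.  Conversely, following at each push_n the
   copy whose simulation emits more a's, a run of P emitting x letters a yields
   an accepting run of P-hat emitting c letters a with x < 2^c, since
   x < 2^cx, y < 2^cy and cy <= cx give x + y < 2^(cx + [y > 0]). *)

Lemma addn_ltn_exp2 c x y : x < 2 ^ y -> c + x < 2 ^ (c + y).
Proof.
move=> lt_x; rewrite expnD; have := ltn_expl c (isT : 1 < 2).
move: (2 ^ c) (2 ^ y) lt_x => p q; nia.
Qed.

Lemma addn_ltn_exp2_max x y cx cy : x < 2 ^ cx -> y < 2 ^ cy -> cy <= cx ->
  x + y < 2 ^ ((0 < y) + cx).
Proof.
move=> lt_x lt_y le_c; have := leq_pexp2l (isT : 0 < 2) le_c.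
case: y lt_y => [|y] lt_y; first by rewrite addn0.
rewrite add1n expnS; lia.
Qed.

Section Runs.
Variables (C G : Type) (step : C -> option G -> C -> Prop).

Lemma run_cat c u c1 v c2 : run step c u c1 -> run step c1 v c2 -> run step c (u ++ v) c2.
Proof. by elim=> // c0 g c3 u0 c4 st _ IH /IH; rewrite -catA; apply: run_step. Qed.

Inductive nrun : nat -> C -> seq G -> C -> Prop :=
| nrun_refl c : nrun 0 c [::] c
| nrun_step k c g c1 u c2 : step c g c1 -> nrun k c1 u c2 -> nrun k.+1 c (out g ++ u) c2.

Lemma run_nrun c u c' : run step c u c' -> exists k, nrun k c u c'.
Proof.
elim=> [c0|c0 g c1 u0 c2 st _ [k r]]; first by exists 0; constructor.
by exists k.+1; apply: nrun_step st r.
Qed.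

Lemma nrun_run k c u c' : nrun k c u c' -> run step c u c'.
Proof. by elim=> [c0|k0 c0 g c1 u0 c2 st _ IH]; [constructor | apply: run_step st IH]. Qed.

End Runs.

Section Stacks.
Variable S : Type.

Lemma apply_op_cat o m (x : stack S m) (s rest : seq (stack S m)) :
  apply_op o (x :: s ++ rest : stack S m.+1) =
  omap (cat^~ rest) (apply_op o (x :: s : stack S m.+1)).
Proof. by case: o => [b|k|k] /=; try case: eqP => //; case: (apply_op _ x). Qed.

Lemma apply_op_below_top o m (x : stack S m) (s : seq (stack S m)) :
  o <> Push m.+1 -> o <> Pop m.+1 ->
  apply_op o (x :: s : stack S m.+1) = omap (cons^~ s) (apply_op o x).
Proof.
case: o => [b|k|k] //= nPush nPop; case: eqP => // Ek.
- by case: nPush; rewrite Ek.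
- by case: nPop; rewrite Ek.
Qed.

Lemma op_topP m (o : op S) :
  [\/ o = Push m.+1, o = Pop m.+1 | o <> Push m.+1 /\ o <> Pop m.+1].
Proof.
case: o => [b|k|k]; first by apply: Or33.
all: case: (eqVneq k m.+1) => [->|ne]; first by constructor.
all: by apply: Or33; split=> // -[Ek]; rewrite Ek eqxx in ne.
Qed.

Lemma apply_op_rew_top n (w : stack S n) b : top1 w = Some b -> apply_op (Rew b) w = Some w.
Proof. by elim: n w => [w [->]|n IH [|x s] // /IH /= ->]. Qed.

End Stacks.

Section Simulation.
Variables (Q S : Type) (G : eqType) (a : G) (m : nat)
  (R : Q -> S -> option G -> op S -> Q -> Prop).

Local Notation stepP := (@hstep Q S G m.+1 R).
Local Notation stepH := (@tstep (hat_state Q) S G m (hat_rule a R)).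

Lemma run_cat_bottom q (s : seq (stack S m)) u q' (s' : seq (stack S m)) rest :
  run stepP (q, s) u (q', s') -> run stepP (q, s ++ rest) u (q', s' ++ rest).
Proof.
move Ec: (q, s) => c; move Ec': (q', s') => c' r.
elim: r q s q' s' Ec Ec' => [c0|c0 g [q1 s1] u0 c2 [b [o [HR [Ht Ha]]]] _ IH]
  q s q' s' Ec Ec'.
  by rewrite -Ec in Ec'; case: Ec' => -> ->; constructor.
move: Ec HR Ht Ha => <- HR; case: s HR => [|x s] HR // Ht Ha.
apply: run_step (IH _ _ _ _ erefl Ec'); exists b, o; do 2!split=> //.
by rewrite apply_op_cat Ha.
Qed.

Lemma nrun_split_bottom k q (s rest : seq (stack S m)) u q' (t : seq (stack S m)) :
  nrun stepP k (q, s ++ rest) u (q', t) -> size t <= size rest ->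
  exists p u1 u2 k1 k2, [/\ u = u1 ++ u2, k1 + k2 = k,
    nrun stepP k1 (q, s) u1 (p, [::]) & nrun stepP k2 (p, rest) u2 (q', t)].
Proof.
elim: k q s u => [|k IH] q [|x s] u r le_t.
- by inversion r; exists q', [::], [::], 0, 0; split=> //; constructor.
- by inversion r; subst; move: le_t; rewrite /= size_cat; lia.
- by exists q, [::], u, 0, k.+1; split=> //; constructor.
inversion r as [|k' c g [q1 s1'] u0 c' st r1]; subst.
have [b [o [HR [Ht Ha]]]] := st.
move: Ha; rewrite apply_op_cat; case Ha: apply_op => [s1|] //= [Es]; subst s1'.
have [p [u1 [u2 [k1 [k2 [-> <- r11 r2]]]]]] := IH _ _ _ r1 le_t.
exists p, (out g ++ u1), u2, k1.+1, k2; split=> //; first by rewrite catA.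
by apply: nrun_step r11; exists b, o.
Qed.

Lemma run_from_empty q u c : run stepP (q, [::]) u c -> u = [::] /\ c = (q, [::]).
Proof. by move=> r; inversion r as [|c0 g c1 u0 c2 [b [o [_ [Ht _]]]]]. Qed.

Lemma run_push_top p1 b p1' p p2 (w : stack S m) u1 u2 :
  R p1 b None (Push m.+1) p1' -> top1 w = Some b ->
  run stepP (p1', [:: w]) u1 (p, [::]) -> run stepP (p, [:: w]) u2 (p2, [::]) ->
  run stepP (p1, [:: w]) (u1 ++ u2) (p2, [::]).
Proof.
move=> HR Ht r1 r2; apply: (@run_step _ _ _ _ None (p1', [:: w; w])).
  by exists b, (Push m.+1); rewrite /= eqxx.
exact: run_cat (run_cat_bottom [:: w] r1) r2.
Qed.

Lemma hat_final_stuck (w : stack S m) g c : ~ stepH (HFin, w) g c.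
Proof. by case=> [b [T [o [HR _]]]]; inversion HR. Qed.

Lemma hat_step_sound p1 p2 w g h w' : stepH (HPair p1 p2, w) g (h, w') ->
  if h is HPair p1' p2' then
    forall v, run stepP (p1', [:: w']) v (p2', [::]) ->
    exists2 v', run stepP (p1, [:: w]) v' (p2, [::]) &
                count_mem a (out g ++ v) <= count_mem a v'
  else g = None /\ run stepP (p1, [:: w]) [::] (p2, [::]).
Proof.
move=> [b [T [o [HR [Ht [HT Ha]]]]]]; rewrite /= in HR Ht HT Ha.
inversion HR as [? ? ? ? p1' ? HR' nPush nPop | ? ? ? HR'
  | ? ? p1' p ? HR' | ? ? p1' p ? HR' | ? ? p1' p ? HR' | ? ? p1' p ? HR']; subst.
3-6: move: Ha; rewrite (apply_op_rew_top Ht) => -[<-].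
- move=> v r; exists (out g ++ v) => //.
  by apply: run_step r; exists b, o; rewrite apply_op_below_top // Ha.
- split=> //; apply: (@run_step _ _ _ _ None (p2, [::]) [::]); last exact: run_refl.
  by exists b, (Pop m.+1); rewrite /= eqxx.
- move=> v r; have [u2 r2] := HT.
  by exists (v ++ u2); [apply: run_push_top HR' Ht r r2 | rewrite /= count_cat leq_addr].
- move=> v r; have [u2 [r2 a_u2]] := HT.
  exists (v ++ u2); first exact: run_push_top HR' Ht r r2.
  by rewrite /= eqxx count_cat addnC leq_add2l -has_pred1 has_count in a_u2 *.
- move=> v r; have [u1 r1] := HT.
  by exists (u1 ++ v); [apply: run_push_top HR' Ht r1 r | rewrite /= count_cat leq_addl].
- move=> v r; have [u1 [r1 a_u1]] := HT.
  exists (u1 ++ v); first exact: run_push_top HR' Ht r1 r.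
  by rewrite /= eqxx count_cat leq_add2r -has_pred1 has_count in a_u1 *.
Qed.

Definition hat_accepts h (w : stack S m) u := exists s, run stepH (h, w) u (HFin, s).

Lemma hat_run_sound h w u s : run stepH (h, w) u (HFin, s) ->
  if h is HPair p1 p2 then
    exists2 v, run stepP (p1, [:: w]) v (p2, [::]) & count_mem a u <= count_mem a v
  else u = [::].
Proof.
move Ec: (h, w) => c; move Ec': (HFin, s) => c' r.
elim: r h w Ec Ec' => [c0|c0 g [h1 w1] u0 c2 st _ IH] h w Ec Ec'.
  by rewrite -Ec' in Ec; case: Ec => ->.
rewrite -{c0}Ec in st; case: h st => [p1 p2|] st; last by case: (hat_final_stuck st).
have := hat_step_sound st; have := IH _ _ erefl Ec'.
case: h1 {st IH} => [p1' p2'|-> [-> r]]; last by exists [::].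
move=> [v r le_v] /(_ v r) [v' r' le_v']; exists v' => //.
by apply: leq_trans le_v'; rewrite !count_cat leq_add2l.
Qed.

Definition mark_a (u : seq G) : option G := if a \in u then Some a else None.

Lemma count_mark_a u : count_mem a (out (mark_a u)) = (0 < count_mem a u).
Proof. by rewrite -has_count has_pred1 /mark_a; case: ifP; rewrite /= ?eqxx. Qed.

Lemma hat_step_push_run_first p1 b p1' p p2 w u2 :
  R p1 b None (Push m.+1) p1' -> top1 w = Some b -> run stepP (p, [:: w]) u2 (p2, [::]) ->
  stepH (HPair p1 p2, w) (mark_a u2) (HPair p1' p, w).
Proof.
move=> HR Ht r2; rewrite /mark_a; case: ifP => a_u2.
  exists b, (Caset a R p p2), (Rew b); split; first exact: hat_iii_a.
  by do !split=> //; [exists u2 | exact: apply_op_rew_top].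
exists b, (Cset R p p2), (Rew b); split; first exact: hat_iii_eps.
by do !split=> //; [exists u2 | exact: apply_op_rew_top].
Qed.

Lemma hat_step_push_run_second p1 b p1' p p2 w u1 :
  R p1 b None (Push m.+1) p1' -> top1 w = Some b -> run stepP (p1', [:: w]) u1 (p, [::]) ->
  stepH (HPair p1 p2, w) (mark_a u1) (HPair p p2, w).
Proof.
move=> HR Ht r1; rewrite /mark_a; case: ifP => a_u1.
  exists b, (Caset a R p1' p), (Rew b); split; first exact: hat_iv_a.
  by do !split=> //; [exists u1 | exact: apply_op_rew_top].
exists b, (Cset R p1' p), (Rew b); split; first exact: hat_iv_eps.
by do !split=> //; [exists u1 | exact: apply_op_rew_top].
Qed.

Lemma hat_accepts_push p1 b p1' p p2 w u1 u2 u1' u2' :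
  R p1 b None (Push m.+1) p1' -> top1 w = Some b ->
  run stepP (p1', [:: w]) u1 (p, [::]) -> run stepP (p, [:: w]) u2 (p2, [::]) ->
  hat_accepts (HPair p1' p) w u1' -> hat_accepts (HPair p p2) w u2' ->
  count_mem a u1 < 2 ^ count_mem a u1' -> count_mem a u2 < 2 ^ count_mem a u2' ->
  exists2 u', hat_accepts (HPair p1 p2) w u' & count_mem a (u1 ++ u2) < 2 ^ count_mem a u'.
Proof.
move=> HR Ht r1 r2 [s1 acc1] [s2 acc2] lt1 lt2; rewrite count_cat.
case: (leqP (count_mem a u2') (count_mem a u1')) => le_c.
  exists (out (mark_a u2) ++ u1').
    by exists s1; apply: run_step acc1; exact: hat_step_push_run_first HR Ht r2.
  by rewrite count_cat count_mark_a; apply: addn_ltn_exp2_max lt1 lt2 le_c.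
exists (out (mark_a u1) ++ u2').
  by exists s2; apply: run_step acc2; exact: hat_step_push_run_second HR Ht r1.
by rewrite addnC count_cat count_mark_a; apply: addn_ltn_exp2_max lt2 lt1 (ltnW le_c).
Qed.

Hypothesis push_pop_silent : forall q b g o q', R q b g o q' ->
  (o = Push m.+1 \/ o = Pop m.+1) -> g = None.

Lemma hat_run_complete k p1 p2 w u : nrun stepP k (p1, [:: w]) u (p2, [::]) ->
  exists2 u', hat_accepts (HPair p1 p2) w u' & count_mem a u < 2 ^ count_mem a u'.
Proof.
elim/ltn_ind: k p1 p2 w u => k IH p1 p2 w u r.
inversion r as [|k0 c g [q1 s1] u0 c' st r1]; subst.
have [b [o [HR [Ht Ha]]]] := st; rewrite /= in HR Ht.
case: (op_topP m o) => [Eo|Eo|[nPush nPop]]; try subst o.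
- have Eg := push_pop_silent HR (or_introl erefl); subst g.
  rewrite /= eqxx in Ha; case: Ha => Es; subst s1.
  have [p [u1 [u2 [k1 [k2 [-> Ek r11 r12]]]]]] := nrun_split_bottom (s := [:: w]) r1 isT.
  have lt_k1 : k1 < k0.+1 by rewrite -Ek ltnS leq_addr.
  have lt_k2 : k2 < k0.+1 by rewrite -Ek ltnS leq_addl.
  have [u1' acc1 lt1] := IH k1 lt_k1 _ _ _ _ r11.
  have [u2' acc2 lt2] := IH k2 lt_k2 _ _ _ _ r12.
  exact: hat_accepts_push HR Ht (nrun_run r11) (nrun_run r12) acc1 acc2 lt1 lt2.
- have Eg := push_pop_silent HR (or_intror erefl); subst g.
  rewrite /= eqxx in Ha; case: Ha => Es; subst s1.
  have [-> [->]] := run_from_empty (nrun_run r1).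
  exists [::] => //; exists w.
  apply: (@run_step _ _ _ _ None (HFin, w) [::]); last exact: run_refl.
  exists b, (fun _ => True), (Rew b); do !split=> //; last exact: apply_op_rew_top.
  exact: hat_ii.
- move: Ha; rewrite apply_op_below_top //; case Ha: apply_op => [w'|] //= [Es]; subst s1.
  have [u' [s acc] lt_u] := IH k0 (ltnSn _) _ _ _ _ r1.
  exists (out g ++ u').
    exists s; apply: run_step acc; exists b, (fun _ => True), o.
    by do !split=> //; exact: hat_i.
  by rewrite !count_cat; apply: addn_ltn_exp2.
Qed.

End Simulation.

Theorem mainTheorem5 (Q S : finType) (G : eqType) (a : G) (m : nat)
    (R : Q -> S -> option G -> op S -> Q -> Prop) (qin qf : Q) (ain : S)
    (HG : forall q b g o q', R q b g o q' -> g = None \/ g = Some a)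
    (Hops : forall q b g o q', R q b g o q' -> in_ops m.+1 o)
    (Heps : forall q b g o q', R q b g o q' -> (o = Push m.+1 \/ o = Pop m.+1) -> g = None) :
  Unb a (@LP Q S G m R qin qf ain) <-> Unb a (@LPhat Q S G a m R qin qf ain).
Proof.
split=> unb N.
- have [w [Lw le_w]] := unb (2 ^ N).
  have [k r] := run_nrun Lw.
  have [u' acc lt_u'] := hat_run_complete a Heps r.
  exists u'; split=> //.
  by rewrite -(leq_exp2l _ _ (isT : 1 < 2)) ltnW // (leq_ltn_trans le_w lt_u').
- have [u [[s acc] le_u]] := unb N.
  have [v r le_v] := hat_run_sound acc.
  by exists v; split; last exact: leq_trans le_u le_v.
Qed.
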